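(* In the binary setting with $R_p=0$ and $0<\beta<1$, the function $U(s,\cdot)$ restricted to $[0,Q-d_l]$ has at most one local maximum point. Writing $$G(\pi)=\frac{\lambda(\kappa-\pi)^\beta w(p)}{\pi^\beta w(1-p)}\Big(1+\frac{\kappa(d_h-Q)}{(\kappa-\pi)(Q-d_l)}\Big)^{\beta-1},$$ if $G(\pi)<1$ then the maximum of $U(s,\cdot)$ over $[0,Q-d_l]$ is attained at $q_s=Q-d_l$, and if $G(\pi)\ge1$ it is attained at the point $$q_s=\frac{\frac{\kappa}{\kappa-\pi}(d_h-Q)}{\Big(\frac{w(1-p)\pi^\beta}{w(p)\lambda(\kappa-\pi)^\beta}\Big)^{\frac{1}{\beta-1}}-1}\in(0,Q-d_l].$$
   Context: Binary setting: $\kappa>0$, $0<d_l<Q<d_h$, $0<p<1$; the demand equals $d_h$ with probability $p$ and $d_l$ with probability $1-p$. $L(y)=0$ if $y\ge0$, $L(y)=\kappa y$ if $y<0$. Value function $v(x)=x^\beta$ for $x\ge0$, $v(x)=-\lambda(-x)^\beta$ for $x<0$, with $\lambda\ge1$. Weighting $w(q)=\exp(-(-\ln q)^\mu)$, $0<\mu\le1$. Price $\pi=\pi_b^{\max}\in(0,\kappa)$. Seller's utility $U(s,q_s)=w(1-p)\,v\big(\pi q_s+L(Q-q_s-d_l)-R_p\big)+w(p)\,v\big(\pi q_s+L(Q-q_s-d_h)-R_p\big)$ for $q_s\ge0$. *)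

From Stdlib Require Import Reals.
Open Scope R_scope.

(* x^b for x >= 0 (with 0^b = 0, b > 0); Rpower alone gives 0^b = 1. *)
Definition rpow (x b : R) : R := if Rle_dec x 0 then 0 else Rpower x b.

Definition Lfun (kappa y : R) : R := if Rle_dec 0 y then 0 else kappa * y.

Definition vfun (beta lambda x : R) : R :=
  if Rle_dec 0 x then rpow x beta else - lambda * rpow (- x) beta.

Definition wfun (mu q : R) : R := exp (- Rpower (- ln q) mu).

Definition Ufun (kappa dl dh Q p beta lambda mu pi Rp qs : R) : R :=
  wfun mu (1 - p) * vfun beta lambda (pi * qs + Lfun kappa (Q - qs - dl) - Rp)
  + wfun mu p * vfun beta lambda (pi * qs + Lfun kappa (Q - qs - dh) - Rp).

Definition local_max_on (f : R -> R) (a b x : R) : Prop :=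
  a <= x <= b /\
  exists eps, 0 < eps /\
    forall y, a <= y <= b -> Rabs (y - x) < eps -> f y <= f x.

Definition max_on_at (f : R -> R) (a b x : R) : Prop :=
  a <= x <= b /\ forall y, a <= y <= b -> f y <= f x.

From Stdlib Require Import Reals Lra.
From Coquelicot Require Import Coquelicot.
Open Scope R_scope.

(* On [0, Q - d_l] only the high-demand scenario incurs a loss, so with
   A = w(1-p) pi^beta, B = w(p) lambda (kappa - pi)^beta and c = kappa (d_h - Q)/(kappa - pi)
   the utility is U(q) = A q^beta - B (q + c)^beta.  Its derivative has the sign of
   A/B - (1 + c/q)^(beta-1), and 1 + c/q decreases in q, so U increases while
   1 + c/q > r := (A/B)^(1/(beta-1)) and decreases afterwards.  The peak is therefore
   q = c/(r - 1) when that point lies in the interval, and the right end Q - d_l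
   otherwise; G < 1 is exactly the condition r < 1 + c/(Q - d_l). *)

Lemma Rpower_pos x y : 0 < Rpower x y.
Proof. apply exp_pos. Qed.

Lemma wfun_pos mu q : 0 < wfun mu q.
Proof. apply exp_pos. Qed.

Lemma rpow_pos_eq x b : 0 < x -> rpow x b = Rpower x b.
Proof. intros Hx; unfold rpow; destruct (Rle_dec x 0); [lra|reflexivity]. Qed.

Lemma rpow_continuity_pt_0 b : 0 < b -> continuity_pt (fun x => rpow x b) 0.
Proof.
intros Hb eps Heps.
exists (Rpower eps (1 / b)); split; [apply Rpower_pos|].
intros x [_ Hx]; simpl in *; unfold R_dist in *.
rewrite Rminus_0_r in Hx.
unfold rpow at 2; destruct (Rle_dec 0 0) as [_|]; [|lra].
unfold rpow; destruct (Rle_dec x 0).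
- rewrite Rminus_0_r, Rabs_R0; lra.
- rewrite Rminus_0_r, Rabs_right by (left; apply Rpower_pos).
  rewrite Rabs_right in Hx by lra.
  apply Rlt_le_trans with (Rpower (Rpower eps (1 / b)) b).
  + apply Rlt_Rpower_l; lra.
  + rewrite Rpower_mult; replace (1 / b * b) with 1 by (field; lra).
    rewrite Rpower_1; lra.
Qed.

Lemma Rpower_neg_exponent_lt_iff x y e : 0 < x -> 0 < y -> e < 0 ->
  (Rpower y e < x <-> Rpower x (1 / e) < y).
Proof.
intros Hx Hy He; unfold Rpower.
rewrite <- (exp_ln x) at 1 by lra; rewrite <- (exp_ln y) at 2 by lra.
assert (E : ln x = e * (1 / e * ln x)) by (field; lra).
split; intros H; apply exp_increasing; apply exp_lt_inv in H;
  [rewrite E in H|rewrite E]; nra.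
Qed.

Lemma Rpower_neg_exponent_gt_iff x y e : 0 < x -> 0 < y -> e < 0 ->
  (x < Rpower y e <-> y < Rpower x (1 / e)).
Proof.
intros Hx Hy He; unfold Rpower.
rewrite <- (exp_ln x) at 1 by lra; rewrite <- (exp_ln y) at 2 by lra.
assert (E : ln x = e * (1 / e * ln x)) by (field; lra).
split; intros H; apply exp_increasing; apply exp_lt_inv in H;
  [rewrite E in H|rewrite E]; nra.
Qed.

Lemma scaled_Rpower_neg_exponent_lt_1_iff a b y e : 0 < a -> 0 < b -> 0 < y -> e < 0 ->
  (b / a * Rpower y e < 1 <-> Rpower (a / b) (1 / e) < y).
Proof.
intros Ha Hb Hy He.
rewrite <- Rpower_neg_exponent_lt_iff by (try apply Rdiv_lt_0_compat; lra).
pose proof (Rpower_pos y e) as Hpow.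
split; intros H; [apply Rmult_lt_reg_l with (b / a)|apply Rmult_lt_reg_l with (a / b)];
  try apply Rdiv_lt_0_compat; try lra; field_simplify; lra.
Qed.

Lemma one_plus_div_lt_contravar c t1 t2 : 0 < c -> 0 < t1 < t2 -> 1 + c / t2 < 1 + c / t1.
Proof.
intros Hc Ht; apply Rplus_lt_compat_l, Rmult_lt_compat_l; [lra|].
apply Rinv_lt_contravar; nra.
Qed.

Section StrictMonotonicity.

Variables (f df : R -> R) (a b : R).
Hypothesis f_deriv : forall t, a < t < b -> derivable_pt_lim f t (df t).
Hypothesis f_cont : forall t, a <= t <= b -> continuity_pt f t.

Lemma MVT_interior x y : a <= x < y -> y <= b ->
  exists t, x < t < y /\ f y - f x = df t * (y - x).
Proof.
intros Hxy Hyb.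
destruct (MVT f id x y (fun t Ht => exist _ (df t) (f_deriv t ltac:(lra)))
  (fun t _ => derivable_pt_id t) ltac:(lra) (fun t Ht => f_cont t ltac:(lra))
  (fun t _ => derivable_continuous_pt _ _ (derivable_pt_id t))) as [t [Ht E]].
exists t; split; [exact Ht|].
simpl in E; rewrite derive_pt_id in E; unfold id in E; lra.
Qed.

Lemma strict_incr_of_deriv_pos : (forall t, a < t < b -> 0 < df t) ->
  forall x y, a <= x < y -> y <= b -> f x < f y.
Proof.
intros Hpos x y Hxy Hyb.
destruct (MVT_interior x y Hxy Hyb) as [t [Ht E]].
assert (0 < df t * (y - x)) by (apply Rmult_lt_0_compat; [apply Hpos|]; lra).
lra.
Qed.

Lemma strict_decr_of_deriv_neg : (forall t, a < t < b -> df t < 0) ->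
  forall x y, a <= x < y -> y <= b -> f y < f x.
Proof.
intros Hneg x y Hxy Hyb.
destruct (MVT_interior x y Hxy Hyb) as [t [Ht E]].
assert (df t * (y - x) < 0) by (apply Rmult_neg_pos; [apply Hneg|]; lra).
lra.
Qed.

End StrictMonotonicity.

Section Unimodal.

Variables (f : R -> R) (a b M : R).
Hypothesis HM : a <= M <= b.
Hypothesis f_incr : forall x y, a <= x < y -> y <= M -> f x < f y.
Hypothesis f_decr : forall x y, M <= x < y -> y <= b -> f y < f x.

Lemma unimodal_max_on_at : max_on_at f a b M.
Proof.
split; [exact HM|]; intros y Hy.
destruct (Rtotal_order y M) as [H|[->|H]].
- left; apply f_incr; lra.
- lra.
- left; apply f_decr; lra.
Qed.

Lemma unimodal_local_max_unique x : local_max_on f a b x -> x = M.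
Proof.
intros [Hx [e [He Hloc]]].
destruct (Rtotal_order x M) as [H|[H|H]]; [exfalso| exact H |exfalso].
- set (y := Rmin (x + e / 2) M).
  assert (Hy : x < y <= M) by (unfold y; apply Rmin_case_strong; lra).
  assert (Hxy : Rabs (y - x) < e).
  { rewrite Rabs_right by lra; unfold y; apply Rmin_case_strong; lra. }
  specialize (Hloc y ltac:(lra) Hxy); specialize (f_incr x y ltac:(lra) ltac:(lra)); lra.
- set (y := Rmax (x - e / 2) M).
  assert (Hy : M <= y < x) by (unfold y; apply Rmax_case_strong; lra).
  assert (Hxy : Rabs (y - x) < e).
  { rewrite Rabs_left by lra; unfold y; apply Rmax_case_strong; lra. }
  specialize (Hloc y ltac:(lra) Hxy); specialize (f_decr y x ltac:(lra) ltac:(lra)); lra.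
Qed.

End Unimodal.

Lemma max_on_at_ext f g a b x : (forall y, a <= y <= b -> f y = g y) ->
  max_on_at f a b x <-> max_on_at g a b x.
Proof.
intros Efg; split; intros [Hx Hmax]; split; auto; intros y Hy.
- rewrite <- !Efg by lra; auto.
- rewrite !Efg by lra; auto.
Qed.

Lemma local_max_on_ext f g a b x : (forall y, a <= y <= b -> f y = g y) ->
  local_max_on f a b x <-> local_max_on g a b x.
Proof.
intros Efg; split; intros [Hx [e [He Hloc]]]; split; auto; exists e; split; auto;
  intros y Hy Hyx.
- rewrite <- !Efg by lra; auto.
- rewrite !Efg by lra; auto.
Qed.

Section PowerGap.

Variables (a b c be : R).
Hypotheses (Ha : 0 < a) (Hb : 0 < b) (Hc : 0 < c) (Hbe : 0 < be < 1).

Definition pow_gap q := a * rpow q be - b * Rpower (q + c) be.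

Definition pow_gap' t := be * (a * Rpower t (be - 1) - b * Rpower (t + c) (be - 1)).

(* the value of [1 + c/t] at which [pow_gap'] changes sign *)
Definition peak_ratio := Rpower (a / b) (1 / (be - 1)).

Lemma pow_gap_deriv t : 0 < t -> derivable_pt_lim pow_gap t (pow_gap' t).
Proof.
intros Ht.
apply (proj1 (is_derive_Reals _ _ _)).
apply (is_derive_ext_loc (fun q => a * Rpower q be - b * Rpower (q + c) be)).
{ exists (mkposreal t Ht); intros q Hq.
  apply Rabs_def2 in Hq; simpl in Hq.
  unfold pow_gap; rewrite rpow_pos_eq by (unfold minus, plus, opp in Hq; simpl in Hq; lra).
  reflexivity. }
apply (proj2 (is_derive_Reals _ _ _)); unfold pow_gap'.
replace (be * (a * Rpower t (be - 1) - b * Rpower (t + c) (be - 1))) with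
  (a * (be * Rpower t (be - 1)) - b * ((be * Rpower (t + c) (be - 1)) * 1)) by ring.
apply derivable_pt_lim_minus, derivable_pt_lim_scal.
- apply derivable_pt_lim_scal, derivable_pt_lim_power; exact Ht.
- apply (derivable_pt_lim_comp (fun q => q + c) (fun q => Rpower q be)).
  + replace 1 with (1 + 0) by ring.
    apply derivable_pt_lim_plus; [apply derivable_pt_lim_id|apply derivable_pt_lim_const].
  + apply derivable_pt_lim_power; lra.
Qed.

Lemma pow_gap_continuity t : 0 <= t -> continuity_pt pow_gap t.
Proof.
intros [Ht|<-].
- apply derivable_continuous_pt; exists (pow_gap' t); apply pow_gap_deriv, Ht.
- apply continuity_pt_minus; apply continuity_pt_scal.
  + apply rpow_continuity_pt_0; lra.
  + apply (continuity_pt_comp (fun q => q + c) (fun q => Rpower q be)).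
    * apply continuity_pt_plus; [apply derivable_continuous_pt, derivable_pt_id|].
      apply continuity_pt_const; intros u v; reflexivity.
    * apply derivable_continuous_pt; exists (be * Rpower (0 + c) (be - 1)).
      apply derivable_pt_lim_power; lra.
Qed.

Lemma pow_gap'_factor t : 0 < t ->
  pow_gap' t = be * b * Rpower t (be - 1) * (a / b - Rpower (1 + c / t) (be - 1)).
Proof.
intros Ht; unfold pow_gap'.
replace (t + c) with (t * (1 + c / t)) by (field; lra).
rewrite <- Rpower_mult_distr by (try apply Rplus_lt_0_compat, Rdiv_lt_0_compat; lra).
field; lra.
Qed.

Lemma pow_gap'_pos t : 0 < t -> peak_ratio < 1 + c / t -> 0 < pow_gap' t.
Proof.
intros Ht Hr; rewrite pow_gap'_factor by exact Ht.
assert (Hcmp : Rpower (1 + c / t) (be - 1) < a / b).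
{ apply Rpower_neg_exponent_lt_iff; [apply Rdiv_lt_0_compat; lra| |lra|exact Hr].
  apply Rplus_lt_0_compat, Rdiv_lt_0_compat; lra. }
pose proof (Rpower_pos t (be - 1)).
apply Rmult_lt_0_compat; [|lra]; repeat apply Rmult_lt_0_compat; lra.
Qed.

Lemma pow_gap'_neg t : 0 < t -> 1 + c / t < peak_ratio -> pow_gap' t < 0.
Proof.
intros Ht Hr; rewrite pow_gap'_factor by exact Ht.
assert (Hcmp : a / b < Rpower (1 + c / t) (be - 1)).
{ apply Rpower_neg_exponent_gt_iff; [apply Rdiv_lt_0_compat; lra| |lra|exact Hr].
  apply Rplus_lt_0_compat, Rdiv_lt_0_compat; lra. }
pose proof (Rpower_pos t (be - 1)).
apply Rmult_pos_neg; [|lra]; repeat apply Rmult_lt_0_compat; lra.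
Qed.

Lemma pow_gap_incr N x y : 0 < N -> peak_ratio <= 1 + c / N ->
  0 <= x < y -> y <= N -> pow_gap x < pow_gap y.
Proof.
intros HN Hr; apply (strict_incr_of_deriv_pos pow_gap pow_gap' 0 N).
- intros t Ht; apply pow_gap_deriv; lra.
- intros t Ht; apply pow_gap_continuity; lra.
- intros t Ht; apply pow_gap'_pos; [lra|].
  pose proof (one_plus_div_lt_contravar c t N Hc Ht); lra.
Qed.

Lemma pow_gap_decr N m x y : 0 < N -> 1 + c / N <= peak_ratio ->
  N <= x < y -> y <= m -> pow_gap y < pow_gap x.
Proof.
intros HN Hr; apply (strict_decr_of_deriv_neg pow_gap pow_gap' N m).
- intros t Ht; apply pow_gap_deriv; lra.
- intros t Ht; apply pow_gap_continuity; lra.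
- intros t Ht; apply pow_gap'_neg; [lra|].
  pose proof (one_plus_div_lt_contravar c N t Hc ltac:(lra)); lra.
Qed.

Section OnInterval.

Variable m : R.
Hypothesis Hm : 0 < m.

Lemma pow_gap_unimodal_at_end : peak_ratio < 1 + c / m ->
  max_on_at pow_gap 0 m m /\ (forall x, local_max_on pow_gap 0 m x -> x = m).
Proof.
intros Hr.
assert (Hincr : forall x y, 0 <= x < y -> y <= m -> pow_gap x < pow_gap y)
  by (intros; apply (pow_gap_incr m); lra).
assert (Hdecr : forall x y, m <= x < y -> y <= m -> pow_gap y < pow_gap x)
  by (intros; lra).
split; [apply unimodal_max_on_at|intros x; apply (unimodal_local_max_unique pow_gap 0 m m)];
  auto; lra.
Qed.

Lemma pow_gap_unimodal_at_peak : 1 + c / m <= peak_ratio ->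
  let M := c / (peak_ratio - 1) in
  0 < M <= m /\ max_on_at pow_gap 0 m M /\ (forall x, local_max_on pow_gap 0 m x -> x = M).
Proof.
intros Hr M.
assert (Hcm : 0 < c / m) by (apply Rdiv_lt_0_compat; lra).
assert (HM : 0 < M) by (apply Rdiv_lt_0_compat; lra).
assert (HrM : 1 + c / M = peak_ratio) by (unfold M; field; lra).
assert (HMm : M <= m).
{ apply Rnot_lt_le; intros HmM.
  pose proof (one_plus_div_lt_contravar c m M Hc ltac:(lra)); lra. }
assert (Hincr : forall x y, 0 <= x < y -> y <= M -> pow_gap x < pow_gap y)
  by (intros; apply (pow_gap_incr M); lra).
assert (Hdecr : forall x y, M <= x < y -> y <= m -> pow_gap y < pow_gap x)
  by (intros; apply (pow_gap_decr M m); lra).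
split; [lra|split; [apply unimodal_max_on_at|intros x; apply (unimodal_local_max_unique pow_gap 0 m M)]];
  auto; lra.
Qed.

Lemma pow_gap_local_max_unique x1 x2 :
  local_max_on pow_gap 0 m x1 -> local_max_on pow_gap 0 m x2 -> x1 = x2.
Proof.
intros H1 H2; destruct (Rlt_le_dec peak_ratio (1 + c / m)) as [Hr|Hr].
- destruct (pow_gap_unimodal_at_end Hr) as [_ Huniq].
  rewrite (Huniq x1 H1), (Huniq x2 H2); reflexivity.
- destruct (pow_gap_unimodal_at_peak Hr) as [_ [_ Huniq]].
  rewrite (Huniq x1 H1), (Huniq x2 H2); reflexivity.
Qed.

End OnInterval.

End PowerGap.

Lemma rpow_scal x y b : 0 < x -> 0 <= y -> rpow (x * y) b = Rpower x b * rpow y b.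
Proof.
intros Hx [Hy|<-].
- rewrite !rpow_pos_eq by nra; symmetry; apply Rpower_mult_distr; lra.
- rewrite Rmult_0_r; unfold rpow; destruct (Rle_dec 0 0); [ring|lra].
Qed.

Lemma Ufun_eq_pow_gap kappa dl dh Q p beta lambda mu pi q :
  0 < pi < kappa -> Q < dh -> 0 <= q <= Q - dl ->
  Ufun kappa dl dh Q p beta lambda mu pi 0 q
  = pow_gap (wfun mu (1 - p) * Rpower pi beta) (wfun mu p * lambda * Rpower (kappa - pi) beta)
      (kappa / (kappa - pi) * (dh - Q)) beta q.
Proof.
intros Hpi HQ Hq; unfold Ufun, pow_gap, vfun, Lfun.
destruct (Rle_dec 0 (Q - q - dl)) as [_|]; [|lra].
destruct (Rle_dec 0 (Q - q - dh)) as [|_]; [lra|].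
destruct (Rle_dec 0 (pi * q + 0 - 0)) as [_|]; [|nra].
destruct (Rle_dec 0 (pi * q + kappa * (Q - q - dh) - 0)) as [|_]; [nra|].
replace (pi * q + 0 - 0) with (pi * q) by ring.
replace (- (pi * q + kappa * (Q - q - dh) - 0))
  with ((kappa - pi) * (q + kappa / (kappa - pi) * (dh - Q))) by (field; lra).
rewrite !rpow_scal by (try apply Rplus_le_le_0_compat, Rmult_le_pos;
  try apply Rlt_le, Rdiv_lt_0_compat; lra).
rewrite (rpow_pos_eq (q + _)) by
  (apply Rplus_le_lt_0_compat, Rmult_lt_0_compat; [|apply Rdiv_lt_0_compat|]; lra).
ring.
Qed.

Theorem mainTheorem5 (kappa dl dh Q p beta lambda mu pi : R)
  (Hkappa : 0 < kappa) (Hdl : 0 < dl) (HdlQ : dl < Q) (HQdh : Q < dh)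
  (Hp : 0 < p < 1) (Hlambda : 1 <= lambda) (Hmu : 0 < mu <= 1)
  (Hpi : 0 < pi < kappa) (Hbeta : 0 < beta < 1) :
  let U := Ufun kappa dl dh Q p beta lambda mu pi 0 in
  let G := lambda * Rpower (kappa - pi) beta * wfun mu p
             / (Rpower pi beta * wfun mu (1 - p))
           * Rpower (1 + kappa * (dh - Q) / ((kappa - pi) * (Q - dl))) (beta - 1) in
  let qstar := (kappa / (kappa - pi) * (dh - Q))
      / (Rpower (wfun mu (1 - p) * Rpower pi beta
                 / (wfun mu p * lambda * Rpower (kappa - pi) beta)) (1 / (beta - 1)) - 1) in
  (forall x1 x2, local_max_on U 0 (Q - dl) x1 -> local_max_on U 0 (Q - dl) x2 -> x1 = x2)
  /\ (G < 1 -> max_on_at U 0 (Q - dl) (Q - dl))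
  /\ (1 <= G -> 0 < qstar <= Q - dl /\ max_on_at U 0 (Q - dl) qstar).
Proof.
intros U G qstar.
set (A := wfun mu (1 - p) * Rpower pi beta).
set (B := wfun mu p * lambda * Rpower (kappa - pi) beta).
set (c := kappa / (kappa - pi) * (dh - Q)).
set (m := Q - dl).
assert (HA : 0 < A) by (apply Rmult_lt_0_compat; [apply wfun_pos|apply Rpower_pos]).
assert (HB : 0 < B)
  by (repeat apply Rmult_lt_0_compat; try apply wfun_pos; try apply Rpower_pos; lra).
assert (Hc : 0 < c) by (apply Rmult_lt_0_compat; [apply Rdiv_lt_0_compat|]; lra).
assert (Hm : 0 < m) by (unfold m; lra).
assert (HU : forall q, 0 <= q <= m -> pow_gap A B c beta q = U q)
  by (intros q Hq; symmetry; apply Ufun_eq_pow_gap; unfold m in Hq; lra).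
assert (HG : G < 1 <-> peak_ratio A B beta < 1 + c / m).
{ replace G with (B / A * Rpower (1 + c / m) (beta - 1)).
  - apply scaled_Rpower_neg_exponent_lt_1_iff; try lra.
    pose proof (Rdiv_lt_0_compat c m Hc Hm); lra.
  - unfold G, B, A, c, m; pose proof (Rpower_pos pi beta); pose proof (wfun_pos mu (1 - p)).
    f_equal; [|f_equal]; field; lra. }
split; [|split].
- intros x1 x2 H1 H2; apply (pow_gap_local_max_unique A B c beta HA HB Hc Hbeta m Hm);
    apply (local_max_on_ext _ _ _ _ _ HU); assumption.
- intros HG1; apply (max_on_at_ext _ _ _ _ _ HU).
  apply (pow_gap_unimodal_at_end A B c beta HA HB Hc Hbeta m Hm), HG, HG1.
- intros HG1.
  assert (Hr : 1 + c / m <= peak_ratio A B beta) by (apply Rnot_lt_le; rewrite <- HG; lra).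
  destruct (pow_gap_unimodal_at_peak A B c beta HA HB Hc Hbeta m Hm Hr) as [HM [Hmax _]].
  split; [exact HM|apply (max_on_at_ext _ _ _ _ _ HU), Hmax].
Qed.
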